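(* Let $\theta>0$, $\lambda>0$, $\mu>0$, $e\ge 0$. For $\alpha\ge0$, $d\ge0$ let $$\pi(\alpha,d)=(\theta+\mu)\alpha-\frac{\alpha^2}{2}-\frac{\alpha}{\alpha+d}\lambda\alpha\theta-d,\qquad W(\alpha,d)=\pi(\alpha,d)-e\,\frac{\alpha}{\alpha+d}\,\lambda\alpha\theta .$$ Then the deployment component of the joint maximizer of $W$ over $(\alpha,d)$ (first-best deployment) is $$\alpha^{**}_{FB}(\theta)=\max\!\left\{0,\;\begin{cases}\mu+\theta\big(1-(1+e)\lambda\big), & (1+e)\lambda\theta\le 1,\\ \theta+\mu+1-2\sqrt{(1+e)\lambda\theta}, & (1+e)\lambda\theta>1.\end{cases}\right\}$$
   Context: $\alpha$ is AI deployment, $d$ security investment, $\theta$ capability, $\lambda$ breach-loss magnitude, $\mu$ organizational readiness, $e$ the breach externality parameter (total social breach damage is $(1+e)p\cdot L$ with $p=\alpha/(\alpha+d)$ and $L=\lambda\alpha\theta$). Convention $p(0,d)=0$. *)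

From HB Require Import structures.
From mathcomp Require Import all_boot all_order all_algebra.
From mathcomp Require Import reals.
Set Implicit Arguments. Unset Strict Implicit. Unset Printing Implicit Defensive.
Import Order.TTheory GRing.Theory Num.Theory.
Local Open Scope ring_scope.

Definition breach_prob {R : realType} (alpha d : R) : R :=
  if alpha == 0 then 0 else alpha / (alpha + d).

Definition payoff {R : realType} (theta lambda mu alpha d : R) : R :=
  (theta + mu) * alpha - alpha ^+ 2 / 2
  - breach_prob alpha d * (lambda * alpha * theta) - d.

Definition welfare {R : realType} (theta lambda mu e alpha d : R) : R :=
  payoff theta lambda mu alpha d - e * (breach_prob alpha d * (lambda * alpha * theta)).

Definition is_FB_maximizer {R : realType} (theta lambda mu e alpha d : R) : Prop :=
  0 <= alpha /\ 0 <= d /\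
  forall a' d' : R, 0 <= a' -> 0 <= d' ->
    welfare theta lambda mu e a' d' <= welfare theta lambda mu e alpha d.

Definition alpha_FB {R : realType} (theta lambda mu e : R) : R :=
  Num.max 0
    (if (1 + e) * lambda * theta <= 1
     then mu + theta * (1 - (1 + e) * lambda)
     else theta + mu + 1 - 2 * Num.sqrt ((1 + e) * lambda * theta)).

(* With k = (1+e) λ θ, welfare is (θ+μ) α - α²/2 - (k α p + d): deployment enters
   only through α, and security only through the expected cost k α²/(α+d) + d.
   For fixed α this cost is minimised at d = 0 when k <= 1 (value k α) and at
   d = α(√k - 1) when k > 1 (value (2√k - 1) α), so maximising over d leaves the
   concave quadratic c α - α²/2 with c = θ + μ - k or θ + μ + 1 - 2√k, whose
   unique maximiser on α >= 0 is max 0 c; the quadratic gap (α - max 0 c)²/2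
   gives uniqueness. *)
From HB Require Import structures.
From mathcomp Require Import all_boot all_order all_algebra.
From mathcomp Require Import reals.
From mathcomp Require Import ring lra.
Set Implicit Arguments. Unset Strict Implicit. Unset Printing Implicit Defensive.
Import Order.TTheory GRing.Theory Num.Theory.
Local Open Scope ring_scope.

Lemma quadratic_le_max_sub_sqr (R : realFieldType) (c a : R) : 0 <= a ->
  c * a - a ^+ 2 / 2 <=
  c * Num.max 0 c - (Num.max 0 c) ^+ 2 / 2 - (a - Num.max 0 c) ^+ 2 / 2.
Proof. by move=> a_ge0; have [] := leP c 0; nra. Qed.

Lemma sqrtr_gt1 (R : rcfType) (x : R) : 1 < x -> 1 < Num.sqrt x.
Proof. by move=> x_gt1; rewrite -sqrtr1 ltr_sqrt //; lra. Qed.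

Section SecurityCost.
Variables (R : realType) (k : R).

Definition expected_cost (a d : R) : R := breach_prob a d * (k * a) + d.

Definition min_cost_rate : R := if k <= 1 then k else 2 * Num.sqrt k - 1.

Definition optimal_security (a : R) : R :=
  if k <= 1 then 0 else a * (Num.sqrt k - 1).

Lemma expected_cost0 d : expected_cost 0 d = d.
Proof. by rewrite /expected_cost /breach_prob eqxx mul0r add0r. Qed.

Lemma expected_costE a d : 0 < a -> 0 <= d ->
  expected_cost a d = k * a ^+ 2 / (a + d) + d.
Proof.
move=> a_gt0 d_ge0; rewrite /expected_cost /breach_prob gt_eqF //.
by field; rewrite gt_eqF //; lra.
Qed.

Lemma optimal_security_ge0 a : 0 <= a -> 0 <= optimal_security a.
Proof.
rewrite /optimal_security => a_ge0; have [//|/sqrtr_gt1 s_gt1] := leP k 1.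
by rewrite mulr_ge0 // subr_ge0 ltW.
Qed.

Lemma min_cost_le_expected_cost a d : 0 <= a -> 0 <= d ->
  min_cost_rate * a <= expected_cost a d.
Proof.
move=> a_ge0 d_ge0; have [->|a_neq0] := eqVneq a 0; first by rewrite mulr0 expected_cost0.
have {a_ge0}a_gt0 : 0 < a by rewrite lt0r a_neq0.
have ad_gt0 : 0 < a + d by lra.
rewrite expected_costE // -subr_ge0 /min_cost_rate; have [k_le1|k_gt1] := leP k 1.
- have -> : k * a ^+ 2 / (a + d) + d - k * a = d * (a + d - k * a) / (a + d).
    by field; rewrite gt_eqF.
  apply: divr_ge0; last exact: ltW.
  by apply: mulr_ge0 => //; nra.
- set s := Num.sqrt k.
  have -> : k = s ^+ 2 by rewrite sqr_sqrtr //; lra.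
  (* The excess over the minimum is a perfect square, vanishing at d = a (s - 1). *)
  have -> : s ^+ 2 * a ^+ 2 / (a + d) + d - (2 * s - 1) * a
            = (s * a - a - d) ^+ 2 / (a + d) by field; rewrite gt_eqF.
  by rewrite divr_ge0 ?sqr_ge0 ?ltW.
Qed.

Lemma expected_cost_optimal a : 0 <= a ->
  expected_cost a (optimal_security a) = min_cost_rate * a.
Proof.
move=> a_ge0; have [->|a_neq0] := eqVneq a 0.
  by rewrite /optimal_security mul0r if_same expected_cost0 mulr0.
have {a_ge0}a_gt0 : 0 < a by rewrite lt0r a_neq0.
rewrite expected_costE ?optimal_security_ge0 ?ltW //.
rewrite /optimal_security /min_cost_rate; have [_|k_gt1] := leP k 1.
- by rewrite addr0; field; rewrite gt_eqF.
- rewrite -[X in X * a ^+ 2]sqr_sqrtr; last by lra.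
  set s := Num.sqrt k; have s_gt1 : 1 < s := sqrtr_gt1 k_gt1.
  have -> : a + a * (s - 1) = a * s by ring.
  by field; rewrite !gt_eqF //; lra.
Qed.

End SecurityCost.

Section Welfare.
Variables (R : realType) (theta lambda mu e : R).

Local Notation k := ((1 + e) * lambda * theta).
Local Notation W := (welfare theta lambda mu e).
Local Notation c := (theta + mu - min_cost_rate k).
Local Notation aFB := (alpha_FB theta lambda mu e).

Lemma welfareE a d : W a d = (theta + mu) * a - a ^+ 2 / 2 - expected_cost k a d.
Proof. by rewrite /welfare /payoff /expected_cost; ring. Qed.

Lemma alpha_FBE : aFB = Num.max 0 c.
Proof.
rewrite /alpha_FB /min_cost_rate; congr Num.max.
by case: ifP => _; ring.
Qed.

Lemma alpha_FB_ge0 : 0 <= aFB.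
Proof. by rewrite alpha_FBE le_max lexx. Qed.

Lemma welfare_le a d : 0 <= a -> 0 <= d ->
  W a d <= c * aFB - aFB ^+ 2 / 2 - (a - aFB) ^+ 2 / 2.
Proof.
move=> a_ge0 d_ge0; rewrite alpha_FBE.
apply: le_trans (quadratic_le_max_sub_sqr c a_ge0).
by rewrite welfareE; have := min_cost_le_expected_cost k a_ge0 d_ge0; lra.
Qed.

Lemma welfare_alpha_FB :
  W aFB (optimal_security k aFB) = c * aFB - aFB ^+ 2 / 2.
Proof. by rewrite welfareE expected_cost_optimal ?alpha_FB_ge0 //; ring. Qed.

End Welfare.

Theorem proposition6 (R : realType) (theta lambda mu e : R) :
  0 < theta -> 0 < lambda -> 0 < mu -> 0 <= e ->
  (exists d : R, is_FB_maximizer theta lambda mu e (alpha_FB theta lambda mu e) d) /\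
  (forall alpha d : R, is_FB_maximizer theta lambda mu e alpha d ->
     alpha = alpha_FB theta lambda mu e).
Proof.
move=> _ _ _ _; set k := (1 + e) * lambda * theta.
have dFB_ge0 := optimal_security_ge0 k (alpha_FB_ge0 theta lambda mu e).
have W_FB := welfare_alpha_FB theta lambda mu e.
split.
- exists (optimal_security k (alpha_FB theta lambda mu e)).
  split; first exact: alpha_FB_ge0.
  split=> // a d a_ge0 d_ge0; rewrite W_FB.
  have := welfare_le theta lambda mu e a_ge0 d_ge0.
  by have := sqr_ge0 (a - alpha_FB theta lambda mu e); lra.
- move=> a d [a_ge0 [d_ge0 a_max]].
  have := a_max _ _ (alpha_FB_ge0 theta lambda mu e) dFB_ge0.
  rewrite W_FB => le_W; have := welfare_le theta lambda mu e a_ge0 d_ge0.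
  move=> /(le_trans le_W) gap.
  by apply/eqP; rewrite -subr_eq0 -sqrf_eq0 eq_le sqr_ge0 andbT; lra.
Qed.
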